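(* Let $t$ be a positive integer with $3\nmid t$. Then for every positive integer $n$, $$b^{2}_{3,2t}(4n+3)\equiv 0 \pmod 4.$$
   Context: For integers $r\ge1$ write $f_r=\prod_{j\ge1}(1-q^{rj})$. For coprime positive integers $\ell,m$ and a positive integer $k$, $b^{k}_{\ell,m}(n)$ denotes the number of $k$-colored partitions of $n$ (each part receives one of $k$ colors) into parts not divisible by $\ell$ or by $m$; equivalently $\sum_{n\ge0} b^{k}_{\ell,m}(n)q^n=\dfrac{f_\ell^k f_m^k}{f_1^k f_{\ell m}^k}$. In particular $\sum_{n\ge0} b^{2}_{3,2t}(n)q^n=\dfrac{f_3^2f_{2t}^2}{f_1^2f_{6t}^2}$. *)

From mathcomp Require Import all_boot.
Set Implicit Arguments. Unset Strict Implicit. Unset Printing Implicit Defensive.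

(* A k-colored partition of n is a multiset of colored parts (j, c), with
   j >= 1 a part size and c : 'I_k a color, whose sizes sum to n.  We encode it
   by its multiplicity function f : (part size, color) -> multiplicity.
   Since every part is >= 1, part sizes and multiplicities are <= n, so the
   function lives in the finite type {ffun 'I_n.+1 * 'I_k -> 'I_n.+1}; the
   encoding is a bijection with multisets.
   b_col k l m n = number of k-colored partitions of n into parts divisible
   neither by l nor by m  (= b^k_{l,m}(n) of the paper). *)
Definition b_col (k l m n : nat) : nat :=
  #|[set f : {ffun 'I_n.+1 * 'I_k -> 'I_n.+1} |
      (\sum_(x : 'I_n.+1 * 'I_k) x.1 * f x == n) &&
      [forall x : 'I_n.+1 * 'I_k,
         (f x != ord0) ==> [&& 0 < x.1, ~~ (l %| x.1) & ~~ (m %| x.1)]]]|.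

(* Let P be the generating function of the parts divisible neither by 3 nor by 2t,
   so that b is the coefficient of q^N in P^2.  Writing
   1/(1 - q^a) = (1 + q^a)/(1 - q^(2a)) and noting that the odd such parts are
   exactly those coprime to 6 gives P = D E modulo q^(N+1), with E even and
   D = prod_(gcd(a,6) = 1) (1 + q^a).  The finite Jacobi triple product, derived
   from the functional equation of G_K(z) = prod_(k<K) (1 + q^(6k+1) z) (z + q^(6k+5))
   under z -> q^6 z, gives D = theta g, with theta = sum_(j in Z) q^(j(3j+2)) and g
   the central z-coefficient of G_K, which is even since G_K(-q,-z) = (-1)^K G_K(q,z).
   As j(3j+2) is 0 or 1 mod 4, theta = T0 + T1 with exponents 0 and 1 mod 4.  In
   ((T0 + T1) W)^2 with W even, the coefficient of q^N, N = 3 mod 4, only comes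
   from 2 T0 T1 W^2, where W^2 is read at an index 2h with h odd; there the
   coefficient of W^2 is even. *)

From mathcomp Require Import all_boot all_algebra.
From mathcomp Require Import ring zify.
Import GRing.Theory.
Local Open Scope ring_scope.

Section TruncatedEquality.
Context {R : nzRingType}.
Implicit Types p q r : {poly R}.

Definition eq_trunc (M : nat) p q := forall i, (i < M)%N -> p`_i = q`_i.

Lemma eq_trunc_refl M p : eq_trunc M p p. Proof. by []. Qed.

Lemma eq_trunc_sym {M p q} : eq_trunc M p q -> eq_trunc M q p.
Proof. by move=> hpq i hi; rewrite hpq. Qed.

Lemma eq_trunc_trans {M p q r} : eq_trunc M p q -> eq_trunc M q r -> eq_trunc M p r.
Proof. by move=> hpq hqr i hi; rewrite hpq // hqr. Qed.

Lemma eq_truncD {M p q p' q'} :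
  eq_trunc M p p' -> eq_trunc M q q' -> eq_trunc M (p + q) (p' + q').
Proof. by move=> hp hq i hi; rewrite !coefD hp // hq. Qed.

Lemma eq_truncM {M p q p' q'} :
  eq_trunc M p p' -> eq_trunc M q q' -> eq_trunc M (p * q) (p' * q').
Proof.
move=> hp hq i hi; rewrite !coefM; apply: eq_bigr => j _.
by rewrite hp ?hq //; apply: leq_ltn_trans hi; [rewrite leq_subr | rewrite -ltnS].
Qed.

Lemma eq_trunc_sum M (I : Type) (s : seq I) (P : pred I) (F G : I -> {poly R}) :
  (forall i, P i -> eq_trunc M (F i) (G i)) ->
  eq_trunc M (\sum_(i <- s | P i) F i) (\sum_(i <- s | P i) G i).
Proof.
move=> hFG; elim/big_rec2: _ => [|i x y Pi hxy]; first exact: eq_trunc_refl.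
exact: eq_truncD (hFG i Pi) hxy.
Qed.

Lemma eq_trunc_prod M (I : Type) (s : seq I) (P : pred I) (F G : I -> {poly R}) :
  (forall i, P i -> eq_trunc M (F i) (G i)) ->
  eq_trunc M (\prod_(i <- s | P i) F i) (\prod_(i <- s | P i) G i).
Proof.
move=> hFG; elim/big_rec2: _ => [|i x y Pi hxy]; first exact: eq_trunc_refl.
exact: eq_truncM (hFG i Pi) hxy.
Qed.

Lemma eq_trunc_addXnM {M n} p r : (M <= n)%N -> eq_trunc M (p + 'X^n * r) p.
Proof.
by move=> hn i hi; rewrite coefD coefXnM (leq_trans hi hn) addr0.
Qed.

Lemma eq_trunc_cancel {M m n p q r s} : (M <= m)%N -> (M <= n)%N ->
  p + 'X^m * r = q + 'X^n * s -> eq_trunc M p q.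
Proof.
move=> hm hn e; apply: eq_trunc_trans (eq_trunc_sym (eq_trunc_addXnM p r hm)) _.
by rewrite e; apply: eq_trunc_addXnM.
Qed.

End TruncatedEquality.

Section ResidueSupport.
Context {R : nzRingType}.
Implicit Types p q : {poly R}.

Definition supp_mod (d r : nat) p := forall i, (i != r %[mod d])%N -> p`_i = 0.

Lemma supp_mod_eq {d r s p} : supp_mod d r p -> (r = s %[mod d])%N -> supp_mod d s p.
Proof. by move=> hp ers i; rewrite -ers; apply: hp. Qed.

Lemma supp_mod_dvd {e d r p} : (e %| d)%N -> supp_mod d r p -> supp_mod e r p.
Proof.
move=> ed hp i hi; apply: hp; apply: contra hi => /eqP eir.
by apply/eqP; rewrite -(modn_dvdm i ed) eir modn_dvdm.
Qed.

Lemma supp_mod0 {d r} : supp_mod d r (0 : {poly R}).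
Proof. by move=> i _; rewrite coef0. Qed.

Lemma supp_modXn d n : supp_mod d n ('X^n : {poly R}).
Proof.
by move=> i hi; rewrite coefXn; case: eqP => [ein|]; rewrite ?ein ?eqxx in hi.
Qed.

Lemma supp_mod1 {d} : supp_mod d 0 (1 : {poly R}).
Proof. by rewrite -(expr0 'X); apply: supp_modXn. Qed.

Lemma supp_modD {d r p q} : supp_mod d r p -> supp_mod d r q -> supp_mod d r (p + q).
Proof. by move=> hp hq i hi; rewrite coefD hp // hq // addr0. Qed.

Lemma supp_modM {d r s p q} :
  supp_mod d r p -> supp_mod d s q -> supp_mod d (r + s) (p * q).
Proof.
move=> hp hq i hi; rewrite coefM big1 // => j _.
have [ejr|njr] := eqVneq (j %% d)%N (r %% d)%N; last by rewrite hp ?mul0r.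
rewrite hq ?mulr0 //; apply: contra hi => /eqP eis.
by rewrite -(subnK (ltn_ord j : (j <= i)%N)) -modnDm eis ejr modnDm addnC.
Qed.

Lemma supp_mod_sum d r (I : Type) (s : seq I) (P : pred I) (F : I -> {poly R}) :
  (forall i, P i -> supp_mod d r (F i)) -> supp_mod d r (\sum_(i <- s | P i) F i).
Proof.
move=> hF; elim/big_rec: _ => [|i x Pi hx]; first exact: supp_mod0.
exact: supp_modD (hF i Pi) hx.
Qed.

Lemma supp_mod_prod d (I : Type) (s : seq I) (P : pred I) (F : I -> {poly R}) :
  (forall i, P i -> supp_mod d 0 (F i)) -> supp_mod d 0 (\prod_(i <- s | P i) F i).
Proof.
move=> hF; elim/big_rec: _ => [|i x Pi hx]; first exact: supp_mod1.
exact: supp_modM (hF i Pi) hx.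
Qed.

End ResidueSupport.

Lemma coef_sqr_even (R : comNzRingType) (p : {poly R}) h :
  (p * p)`_(2 * h) = (\sum_(j < h) p`_j * p`_(2 * h - j)) *+ 2 + p`_h ^+ 2.
Proof.
rewrite coefM (_ : (2 * h).+1 = h + (1 + h))%N; last lia.
rewrite big_split_ord big_split_ord big_ord1 /= addn0 mulr2n.
rewrite (_ : (2 * h - h = h)%N) -?expr2; last lia.
rewrite [p`_h ^+ 2 + _]addrC addrA; congr (_ + _ + _).
rewrite [RHS](reindex_inj rev_ord_inj).
apply: eq_bigr => j _ /=; have := ltn_ord j => hj.
rewrite mulrC; congr (p`_ _ * p`_ _); lia.
Qed.

Lemma dvdz_coef_sqr (W : {poly int}) i :
  supp_mod 2 0 W -> (i = 2 %[mod 4])%N -> (2 %| (W * W)`_i)%Z.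
Proof.
move=> hW hi; have [h -> oh] : exists2 h, i = (2 * h)%N & odd h.
  by exists i./2; move: hi; lia.
rewrite coef_sqr_even (hW h) ?expr0n ?addr0; last by move: oh; lia.
by rewrite -mulr_natr dvdz_mull.
Qed.

Lemma dvdz4_coef_sqr (T0 T1 W : {poly int}) N :
  supp_mod 4 0 T0 -> supp_mod 4 1 T1 -> supp_mod 2 0 W -> (N = 3 %[mod 4])%N ->
  (4 %| (((T0 + T1) * W) ^+ 2)`_N)%Z.
Proof.
move=> h0 h1 hW hN.
have -> : ((T0 + T1) * W) ^+ 2 =
    (T0 * W) * (T0 * W) + (T1 * T1) * (W * W) + ((T0 * T1) * (W * W)) *+ 2.
  by rewrite mulr2n; ring.
have h0' := supp_mod_dvd (isT : (2 %| 4)%N) h0.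
have h11 := supp_mod_dvd (isT : (2 %| 4)%N) (supp_modM h1 h1).
rewrite coefD coefMn coefD.
rewrite (supp_modM (supp_modM h0' hW) (supp_modM h0' hW)); last by move: hN; lia.
rewrite (supp_modM h11 (supp_modM hW hW)); last by move: hN; lia.
rewrite !add0r -[_ *+ 2]mulr_natr (_ : 4 = 2 * 2) // dvdz_mul2r //.
rewrite coefM; apply: rpred_sum => j _; have hj := ltn_ord j.
have [ej|nj] := eqVneq (j %% 4)%N 1%N; last by rewrite (supp_modM h0 h1) ?mul0r.
by apply: dvdz_mull; apply: dvdz_coef_sqr => //; move: ej hN; lia.
Qed.

Definition part_ok (l m a : nat) := [&& 0 < a, ~~ (l %| a) & ~~ (m %| a)]%N.

Definition geom {R : nzRingType} (a n : nat) : {poly R} := \sum_(j < n) 'X^(a * j).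

Definition part_poly (R : nzRingType) (l m N : nat) : {poly R} :=
  \prod_(a < N.+1 | part_ok l m a) geom a N.+1.

Lemma b_col_coef (R : comNzRingType) k l m N :
  (b_col k l m N)%:R = ((part_poly R l m N) ^+ k)`_N.
Proof.
pose G a : {poly R} := if part_ok l m a then geom a N.+1 else 1.
pose F (x : 'I_N.+1 * 'I_k) (j : 'I_N.+1) : {poly R} :=
  if (j != ord0) ==> part_ok l m x.1 then 'X^(x.1 * j) else 0.
have sumF x : \sum_j F x j = G x.1.
  rewrite /F /G; case: (part_ok l m x.1).
    by apply: eq_bigr => j _; rewrite implybT.
  rewrite (eq_bigr (fun j : 'I_N.+1 => if j == ord0 then 'X^(x.1 * j) else 0)).
    by rewrite -big_mkcond big_pred1_eq muln0 expr0.
  by move=> j _; rewrite implybF negbK.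
have -> : part_poly R l m N ^+ k = \prod_x \sum_j F x j.
  under [RHS]eq_bigr do rewrite sumF.
  rewrite -(pair_big predT predT (fun (a : 'I_N.+1) (_ : 'I_k) => G a)) /=.
  under eq_bigr do rewrite prodr_const card_ord.
  by rewrite prodrXl /part_poly big_mkcond.
have coefF (f : {ffun 'I_N.+1 * 'I_k -> 'I_N.+1}) :
    (\prod_x F x (f x))`_N =
    ([forall x : 'I_N.+1 * 'I_k, (f x != ord0) ==> part_ok l m x.1] &&
     (N == \sum_(x : 'I_N.+1 * 'I_k) x.1 * f x)%N)%:R.
  case: (boolP [forall x, _]) => [f_ok | /forallPn [x x_bad]] /=.
    under eq_bigr => x _ do rewrite /F (forallP f_ok x).
    by rewrite prodrXr coefXn.
  by rewrite (bigD1 x) //= {1}/F (negbTE x_bad) mul0r coef0.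
rewrite bigA_distr_bigA coef_sum; under eq_bigr do rewrite coefF.
rewrite -natr_sum /b_col cardsE -sum1_card big_mkcond /=.
congr _%:R; apply: eq_bigr => f _.
by rewrite unfold_in /part_ok andbC eq_sym; case: (_ && _).
Qed.

Lemma geom_double (R : comNzRingType) a n :
  (1 + 'X^a) * geom (2 * a) n = geom a n * (1 + 'X^(a * n)) :> {poly R}.
Proof.
have -> : geom a n * (1 + 'X^(a * n)) = geom a (2 * n) :> {poly R}.
  rewrite /geom (_ : (2 * n = n + n)%N); last lia.
  rewrite big_split_ord /= mulrDr mulr1 big_distrl /=; congr (_ + _).
  by apply: eq_bigr => j _; rewrite -exprD; congr (_ ^+ _); lia.
elim: n => [|n IH]; first by rewrite /geom !big_ord0 mulr0.
rewrite /geom (_ : (2 * n.+1 = (2 * n).+2)%N); last lia.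
rewrite big_ord_recr /= !big_ord_recr /= -/(geom (2 * a) n : {poly R}).
rewrite -[\sum_(i < 2 * n) _]/(geom a (2 * n) : {poly R}) -IH.
rewrite (_ : (a * (2 * n).+1 = a + 2 * a * n)%N); last lia.
by rewrite (_ : (a * (2 * n) = 2 * a * n)%N) ?exprD; [ring | lia].
Qed.

Lemma geom_trunc (R : comNzRingType) a n : (0 < a)%N ->
  eq_trunc n (geom a n) ((1 + 'X^a) * geom (2 * a) n :> {poly R}).
Proof.
move=> a_gt0; rewrite geom_double mulrDr mulr1 [_ * 'X^_]mulrC.
exact/eq_trunc_sym/eq_trunc_addXnM/leq_pmull.
Qed.

Lemma part_poly_trunc l m N : exists2 E : {poly int}, supp_mod 2 0 E &
  eq_trunc N.+1 (part_poly int l m N)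
    ((\prod_(a < N.+1 | part_ok l m a && odd a) (1 + 'X^a)) * E).
Proof.
exists ((\prod_(a < N.+1 | part_ok l m a && ~~ odd a) (1 + 'X^a)) *
        \prod_(a < N.+1 | part_ok l m a) geom (2 * a) N.+1).
  apply: (supp_modM (r := 0) (s := 0)); apply: supp_mod_prod => a.
    move=> /andP [_ a_even]; apply: supp_modD supp_mod1 _.
    by apply: (supp_mod_eq (supp_modXn _ _)); move: a_even; lia.
  move=> _; apply: supp_mod_sum => j _; apply: (supp_mod_eq (supp_modXn _ _)).
  by rewrite -mulnA modnMr.
rewrite mulrA -(bigID (fun a : 'I_N.+1 => odd a)) /= -big_split /=.
apply: eq_trunc_prod => a /and3P [a_gt0 _ _]; exact: geom_trunc.
Qed.

Lemma prod_1addXn_trunc (R : nzRingType) (P : pred nat) M n : (M <= n)%N ->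
  eq_trunc M (\prod_(a < n | P a) (1 + 'X^a))
             (\prod_(a < M | P a) (1 + 'X^a) : {poly R}).
Proof.
move=> le_Mn; rewrite -(subnKC le_Mn) big_split_ord /=.
rewrite -[X in eq_trunc _ _ X]mulr1; apply: eq_truncM (eq_trunc_refl _ _) _.
apply: (eq_trunc_trans (q := \prod_(i < n - M | P (M + i)%N) 1)).
  apply: eq_trunc_prod => i _; rewrite -[X in 1 + X]mulr1.
  exact/eq_trunc_addXnM/leq_addr.
by rewrite big1_eq; apply: eq_trunc_refl.
Qed.

Lemma part_ok_odd_coprime6 t a : part_ok 3 (2 * t) a && odd a = coprime a 6.
Proof.
rewrite (_ : 6 = 2 * 3)%N // coprimeMr coprimen2 coprime_sym prime_coprime //.
rewrite /part_ok andbC; case: (boolP (odd a)) => //= a_odd.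
have -> : ~~ (2 * t %| a)%N.
  by apply: contraL a_odd => /(dvdn_trans (dvdn_mulr t (dvdnn 2))); rewrite dvdn2.
by rewrite odd_gt0 // andbT.
Qed.

Lemma prod_coprime6 (R : nzRingType) (F : nat -> R) K :
  \prod_(a < 6 * K | coprime a 6) F a =
  \prod_(k < K) (F (6 * k + 1)%N * F (6 * k + 5)%N).
Proof.
elim: K => [|K IH]; first by rewrite !big_ord0.
rewrite (_ : (6 * K.+1 = 6 * K + 6)%N); last lia.
rewrite big_split_ord /= IH big_ord_recr /=; congr (_ * _).
rewrite (eq_bigl (fun i : 'I_6 => (i == 1 :> nat) || (i == 5 :> nat))).
  by rewrite big_mkcond /= !big_ord_recl big_ord0 /= !mul1r mulr1.
move=> i /=; rewrite -coprime_modl (_ : (6 * K + i) %% 6 = i)%N.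
  by case: i => [[|[|[|[|[|[|]]]]]]].
by have := ltn_ord i; lia.
Qed.

Lemma coef_comp_scale (R : comNzRingType) (p : {poly R}) (c : R) i :
  (p \Po (c%:P * 'X))`_i = c ^+ i * p`_i.
Proof.
elim/poly_ind: p i => [|p a IH] i; first by rewrite comp_poly0 !coef0 mulr0.
rewrite comp_poly_MXaddC !coefD !coefC mulrA !coefMX.
case: i => [|i] /=; first by rewrite expr0 mul1r.
by rewrite coefMC IH exprS !addr0; ring.
Qed.

Lemma Xn_neq0 (R : idomainType) n : ('X^n : {poly R}) != 0.
Proof. by rewrite expf_eq0 polyX_eq0 andbF. Qed.

Lemma exprD_eq {R : pzSemiRingType} (x : R) {a b c : nat} :
  (a = b + c)%N -> x ^+ a = x ^+ b * x ^+ c.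
Proof. by move=> ->; rewrite exprD. Qed.

(* Polynomials in [z = 'X] with coefficients in [{poly int}], whose variable is [q]. *)
Local Notation q := ('X%:P : {poly {poly int}}).

Definition triple_factor (k : nat) : {poly {poly int}} :=
  (1 + q ^+ (6 * k + 1) * 'X) * ('X + q ^+ (6 * k + 5)).

Definition triple_prod (K : nat) : {poly {poly int}} := \prod_(k < K) triple_factor k.

Lemma polyC_Xn n : ('X^n : {poly int})%:P = q ^+ n.
Proof. exact: rmorphXn. Qed.

Lemma triple_factor_scale k :
  triple_factor k \Po (q ^+ 6 * 'X) =
  (1 + q ^+ (6 * k + 7) * 'X) * (q ^+ 6 * 'X + q ^+ (6 * k + 5)).
Proof.
rewrite /triple_factor comp_polyM !comp_polyD comp_polyM comp_polyX.
have e7 : (6 * k + 7 = (6 * k + 1) + 6)%N by lia.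
by rewrite -!polyC_Xn !comp_polyC polyC1 !polyC_Xn (exprD_eq _ e7) mulrA.
Qed.

Lemma triple_prod_scale K :
  (triple_prod K.+1 \Po (q ^+ 6 * 'X)) * ('X + q ^+ (6 * K + 5)) =
  q ^+ (6 * K + 5) * (1 + q ^+ (6 * K + 7) * 'X) * triple_prod K.+1.
Proof.
elim: K => [|K IH].
  rewrite /triple_prod big_ord1 triple_factor_scale /triple_factor /=; ring.
rewrite /triple_prod big_ord_recr /= -/(triple_prod K.+1) comp_polyM.
rewrite triple_factor_scale /triple_factor.
have e1 : (6 * K.+1 + 1 = 6 * K + 7)%N by lia.
have e5 : (6 * K.+1 + 5 = 6 + (6 * K + 5))%N by lia.
have e7 : (6 * K.+1 + 7 = 6 + (6 * K + 7))%N by lia.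
rewrite e1 (exprD_eq _ e5) (exprD_eq _ e7).
move: IH; set c := q ^+ (6 * K + 5); set d := q ^+ (6 * K + 7); set s := q ^+ 6.
set G := triple_prod K.+1; set Gs := G \Po (s * 'X) => IH.
have -> : Gs * ((1 + s * d * 'X) * (s * 'X + s * c)) * ('X + s * c) =
  (Gs * ('X + c)) * (s * (1 + s * d * 'X) * ('X + s * c)) by ring.
rewrite IH; ring.
Qed.

Section Coefficients.
Variable K : nat.
Local Notation g i := (triple_prod K.+1)`_i.

Lemma coef_triple_prod_rec i :
  'X^(6 * i) * g i + 'X^(6 * K + 6 * i + 11) * g i.+1 =
  'X^(6 * K + 5) * g i.+1 + 'X^(12 * K + 12) * g i.
Proof.
have := congr1 (fun P : {poly {poly int}} => P`_i.+1) (triple_prod_scale K) => /=.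
rewrite -!polyC_Xn mulrDr coefD coefMX /= coefMC !coef_comp_scale.
set c := 'X^(6 * K + 5); set d := 'X^(6 * K + 7).
have -> : c%:P * (1 + d%:P * 'X) * triple_prod K.+1 =
    c%:P * triple_prod K.+1 + (c * d)%:P * (triple_prod K.+1 * 'X).
  by rewrite polyCM; ring.
rewrite coefD !coefCM coefMX /= -!exprM => e.
have e1 : (6 * K + 6 * i + 11 = 6 * i.+1 + (6 * K + 5))%N by lia.
have e2 : (12 * K + 12 = (6 * K + 5) + (6 * K + 7))%N by lia.
by rewrite (exprD_eq _ e1) (exprD_eq _ e2) -/c -/d -e; ring.
Qed.

Lemma coef_triple_prod_up M j : (M <= 6 * K + 7)%N ->
  eq_trunc M (g (K.+1 + j).+1) ('X^(6 * j + 1) * g (K.+1 + j)).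
Proof.
move=> hM; set i := (K.+1 + j)%N; have := coef_triple_prod_rec i.
have e1 : (6 * i = (6 * K + 5) + (6 * j + 1))%N by rewrite /i; lia.
have e2 : (6 * K + 6 * i + 11 = (6 * K + 5) + (6 * K + 6 * j + 12))%N by rewrite /i; lia.
have e3 : (12 * K + 12 = (6 * K + 5) + (6 * K + 7))%N by lia.
rewrite (exprD_eq _ e1) (exprD_eq _ e2) (exprD_eq _ e3) -!mulrA -!mulrDr.
move=> /(mulfI (Xn_neq0 _ _)) e; apply: eq_trunc_sym.
by apply: eq_trunc_cancel e; first lia.
Qed.

Lemma coef_triple_prod_down M j : (M <= 6 * K + 11)%N -> (j <= K)%N ->
  eq_trunc M (g (K - j)) ('X^(6 * j + 5) * g (K - j).+1).
Proof.
move=> hM hj; set i := (K - j)%N; have := coef_triple_prod_rec i.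
have e1 : (6 * K + 5 = 6 * i + (6 * j + 5))%N by rewrite /i; lia.
have e2 : (6 * K + 6 * i + 11 = 6 * i + (6 * K + 11))%N by lia.
have e3 : (12 * K + 12 = 6 * i + (6 * K + 6 * j + 12))%N by rewrite /i; lia.
rewrite (exprD_eq _ e1) (exprD_eq _ e2) (exprD_eq _ e3) -!mulrA -!mulrDr.
move=> /(mulfI (Xn_neq0 _ _)) e.
by apply: eq_trunc_cancel e; last lia.
Qed.

End Coefficients.

(* [octn j = j (3 j - 2)] and [octp j = j (3 j + 2)], the values of [x (3 x + 2)]
   at [x = -j] and [x = j]. *)
Fixpoint octn j := if j is j'.+1 then (octn j' + 6 * j' + 1)%N else 0%N.
Fixpoint octp j := if j is j'.+1 then (octp j' + 6 * j' + 5)%N else 0%N.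

Section Chains.
Variables K M : nat.
Hypothesis hM : (M <= 6 * K + 7)%N.
Local Notation g i := (triple_prod K.+1)`_i.

Lemma coef_triple_prod_up_chain j : eq_trunc M (g (K.+1 + j)) ('X^(octn j) * g K.+1).
Proof.
elim: j => [|j IH]; first by rewrite addn0 expr0 mul1r; apply: eq_trunc_refl.
rewrite addnS; apply: eq_trunc_trans (coef_triple_prod_up K M j hM) _.
have e : (octn j.+1 = (6 * j + 1) + octn j)%N by rewrite /=; lia.
by rewrite (exprD_eq _ e) -mulrA; apply: eq_truncM (eq_trunc_refl _ _) IH.
Qed.

Lemma coef_triple_prod_down_chain j :
  (j <= K.+1)%N -> eq_trunc M (g (K.+1 - j)) ('X^(octp j) * g K.+1).
Proof.
elim: j => [|j IH] hj; first by rewrite subn0 expr0 mul1r; apply: eq_trunc_refl.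
have hM' : (M <= 6 * K + 11)%N by lia.
rewrite subSS; apply: eq_trunc_trans (coef_triple_prod_down K M j hM' hj) _.
have e : (octp j.+1 = (6 * j + 5) + octp j)%N by rewrite /=; lia.
rewrite -subSn // (exprD_eq _ e) -mulrA.
exact: eq_truncM (eq_trunc_refl _ _) (IH (ltnW hj)).
Qed.

Definition theta (m n : nat) : {poly int} :=
  \sum_(j < m) 'X^(octn j) + \sum_(j < n) 'X^(octp j.+1).

Lemma triple_prod_at1_trunc :
  eq_trunc M (triple_prod K.+1).[1] (theta (size (triple_prod K.+1)) K.+1 * g K.+1).
Proof.
rewrite (@horner_coef_wide _ (K.+1 + size (triple_prod K.+1))) ?leq_addl //.
under eq_bigr do rewrite expr1n mulr1.
rewrite big_split_ord /= /theta mulrDl addrC !big_distrl /=.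
apply: eq_truncD; first by apply: eq_trunc_sum => j _; apply: coef_triple_prod_up_chain.
rewrite (reindex_inj rev_ord_inj) /=.
apply: eq_trunc_sum => j _; have := ltn_ord j; rewrite subSS => hj.
by have := coef_triple_prod_down_chain j.+1 hj; rewrite subSS.
Qed.

End Chains.

Lemma octn_mod4 j : octn j = odd j %[mod 4].
Proof. by elim: j => //= j IH; move: IH; case oj: (odd j) => /=; lia. Qed.

Lemma octp_mod4 j : octp j = odd j %[mod 4].
Proof. by elim: j => //= j IH; move: IH; case oj: (odd j) => /=; lia. Qed.

Lemma theta_split m n :
  exists T0 T1, [/\ theta m n = T0 + T1, supp_mod 4 0 T0 & supp_mod 4 1 T1].
Proof.
exists (\sum_(j < m | ~~ odd j) 'X^(octn j) + \sum_(j < n | ~~ odd j.+1) 'X^(octp j.+1)).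
exists (\sum_(j < m | odd j) 'X^(octn j) + \sum_(j < n | odd j.+1) 'X^(octp j.+1)).
split.
- rewrite /theta (bigID (fun j : 'I_m => odd j)) /=.
  by rewrite [X in _ + X](bigID (fun j : 'I_n => odd j.+1)) /=; ring.
- apply: supp_modD; apply: supp_mod_sum => j hj.
    by apply: (supp_mod_eq (supp_modXn _ _)); rewrite octn_mod4 (negbTE hj).
  by apply: (supp_mod_eq (supp_modXn _ _)); rewrite octp_mod4 (negbTE hj).
- apply: supp_modD; apply: supp_mod_sum => j hj.
    by apply: (supp_mod_eq (supp_modXn _ _)); rewrite octn_mod4 hj.
  by apply: (supp_mod_eq (supp_modXn _ _)); rewrite octp_mod4 hj.
Qed.

(* [parity_graded s P] encodes [P(-q,-z) = (-1)^s P(q,z)]. *)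
Definition parity_graded (s : nat) (P : {poly {poly int}}) :=
  forall d, supp_mod 2 (d + s) P`_d.

Lemma parity_gradedM s s' P Q :
  parity_graded s P -> parity_graded s' Q -> parity_graded (s + s') (P * Q).
Proof.
move=> hP hQ d; rewrite coefM; apply: supp_mod_sum => j _.
by apply: (supp_mod_eq (supp_modM (hP j) (hQ (d - j)%N))); have := ltn_ord j; lia.
Qed.

Lemma parity_graded_linear s (a b : {poly int}) :
  supp_mod 2 s a -> supp_mod 2 s.+1 b -> parity_graded s (a%:P + b%:P * 'X).
Proof.
move=> ha hb [|[|d]]; rewrite coefD coefC coefCM coefX /=.
- by rewrite mulr0 addr0.
- by rewrite mulr1 add0r.
- by rewrite mulr0 addr0; apply: supp_mod0.
Qed.

Lemma triple_factor_graded k : parity_graded 1 (triple_factor k).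
Proof.
have -> : triple_factor k =
    (1%:P + ('X^(6 * k + 1))%:P * 'X) * (('X^(6 * k + 5))%:P + 1%:P * 'X).
  by rewrite /triple_factor !polyC_Xn polyC1; ring.
have odd_Xn e : odd e -> supp_mod 2 1 ('X^e : {poly int}).
  by move=> oe; apply: (supp_mod_eq (supp_modXn _ _)); move: oe; lia.
apply: (@parity_gradedM 0 1); apply: parity_graded_linear.
- exact: supp_mod1.
- by apply: odd_Xn; rewrite oddD oddM.
- by apply: odd_Xn; rewrite oddD oddM.
- by apply: (supp_mod_eq supp_mod1).
Qed.

Lemma triple_prod_graded K : parity_graded K (triple_prod K).
Proof.
elim: K => [|K IH]; rewrite /triple_prod ?big_ord0 ?big_ord_recr /=.
  by move=> [|d]; rewrite coef1 /=; [apply: supp_mod1 | apply: supp_mod0].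
by rewrite -addn1; apply: parity_gradedM (triple_factor_graded K).
Qed.

Lemma coef_triple_prod_mid K : supp_mod 2 0 (triple_prod K)`_K.
Proof. by apply: (supp_mod_eq (triple_prod_graded K K)); lia. Qed.

Lemma triple_prod_at1_prod K :
  (triple_prod K).[1] = \prod_(a < 6 * K | coprime a 6) (1 + 'X^a).
Proof.
rewrite (prod_coprime6 _ (fun a => 1 + 'X^a)) /triple_prod horner_prod.
apply: eq_bigr => k _.
by rewrite /triple_factor !hornerE; ring.
Qed.

Lemma part_poly_3_trunc t N : exists T0 T1 W : {poly int},
  [/\ supp_mod 4 0 T0, supp_mod 4 1 T1, supp_mod 2 0 W &
      eq_trunc N.+1 (part_poly int 3 (2 * t) N) ((T0 + T1) * W)].
Proof.
have [E E_even PE] := part_poly_trunc 3 (2 * t) N.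
have [T0 [T1 [T01 T0_supp T1_supp]]] := theta_split (size (triple_prod N.+1)) N.+1.
exists T0, T1, ((triple_prod N.+1)`_N.+1 * E); split => //.
  exact: (supp_modM (r := 0) (s := 0) (coef_triple_prod_mid _) E_even).
apply: (eq_trunc_trans PE); rewrite mulrA -T01; apply: (eq_truncM _ (eq_trunc_refl _ _)).
under eq_bigl do rewrite part_ok_odd_coprime6.
have le_N : (N.+1 <= 6 * N.+1)%N by lia.
apply: (eq_trunc_trans (eq_trunc_sym (prod_1addXn_trunc int (coprime^~ 6) _ _ le_N))).
by rewrite -triple_prod_at1_prod; apply: triple_prod_at1_trunc; lia.
Qed.

Local Close Scope ring_scope.

Theorem mainTheorem2 (t n : nat) :
  0 < t -> ~~ (3 %| t) -> 0 < n ->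
  b_col 2 3 (2 * t) (4 * n + 3) %% 4 = 0.
Proof.
move=> _ _ _; set N := 4 * n + 3.
have [T0 [T1 [W [T0_supp T1_supp W_even PW]]]] := part_poly_3_trunc t N.
apply/eqP; change (4 %| (b_col 2 3 (2 * t) N)%:Z)%Z; rewrite -natz b_col_coef.
have -> : ((part_poly int 3 (2 * t) N ^+ 2)`_N = (((T0 + T1) * W) ^+ 2)`_N)%R.
  by rewrite !GRing.expr2; apply: (eq_truncM PW PW); rewrite ltnSn.
by apply: dvdz4_coef_sqr => //; rewrite /N; lia.
Qed.
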